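(* Consider a run of \textsc{1-2-MinGreedy} on a finite simple undirected graph $G=(V,E)$ producing $M$, and a maximum matching $M^*$ such that each component of $(V,M\cup M^* )$ with an edge is an edge of $M\cap M^*$ or an $M$-$M^*$-path. Let $X$ be an $M$-$M^*$-path created in the step in which $u$ is matched with $v$, and assume that a degree-1 endpoint exists after creation of $X$. Then the node $u'$ selected by the algorithm in the next step is either (a) an $M^*$-neighbor of $u$ or $v$ in $X$, or (b) a neighbor of $u$ or $v$ via an edge of $F$ that belongs to a component $Y\neq X$ of $(V,M\cup M^* )$.
   Context: \textsc{1-2-MinGreedy}: starting with $M=\emptyset$ and until no edges remain in the current graph, if every node has current degree at least $3$ select an arbitrary edge $\{u,v\}$ (call $u$ the selected node), otherwise select an arbitrary node $u$ of minimum non-zero current degree and an arbitrary neighbor $v$; add $\{u,v\}$ to $M$ and remove all edges incident with $u$ or $v$. An $M$-$M^*$-path is a component of $(V,M\cup M^* )$ that is an alternating path starting and ending with an $M^*$-edge, with $m\geq1$ edges of $M$ and $m+1$ edges of $M^*$; its endpoints are its two $M$-uncovered end nodes. The creation step of $X$ is the step in which the first $M$-edge of $X$ is picked. $F=E\setminus(M\cup M^* )$. For an endpoint $w$, an edge $\{v,w\}\in F$ is a transfer from $v$ to $w$ if, in the step in which $v$ is matched, the current degree of $w$ drops to at most $1$; such a transfer is canceled if at the moment $w$ has current degree $1$ with the single remaining edge $\{v,w\}\in F$, $w$ is already the target of two transfers from nodes matched earlier. A debit is a non-canceled transfer. A degree-1 endpoint exists after creation of $X$ if $u$ or $v$ pays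 a debit to some endpoint $w$ and $w$ has current degree exactly $1$ immediately after the creation step. *)

From mathcomp Require Import all_boot.
Set Implicit Arguments. Unset Strict Implicit. Unset Printing Implicit Defensive.

Section OneTwoMinGreedy.
Variable V : finType.

Definition simple_graph (adj : rel V) := symmetric adj /\ irreflexive adj.

Definition edges (adj : rel V) : {set {set V}} :=
  [set e : {set V} | [exists x, exists y, adj x y && (e == [set x; y])]].

Definition is_matching (adj : rel V) (N : {set {set V}}) :=
  N \subset edges adj /\
  (forall e1 e2, e1 \in N -> e2 \in N -> e1 != e2 -> [disjoint e1 & e2]).

Definition maximum_matching (adj : rel V) (N : {set {set V}}) :=
  is_matching adj N /\ (forall N', is_matching adj N' -> #|N'| <= #|N|).

(* A run of the algorithm is the sequence s of picked pairs (u_j, v_j),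
   u_j being the selected node of step j (steps numbered 0, 1, ...).
   [covered s j x]: x is matched in one of the first j steps. *)
Definition covered (s : seq (V * V)) (j : nat) (x : V) : bool :=
  has (fun p : V * V => (p.1 == x) || (p.2 == x)) (take j s).

Definition present (adj : rel V) (s : seq (V * V)) (j : nat) (x y : V) : bool :=
  [&& adj x y, ~~ covered s j x & ~~ covered s j y].

(* current degree of w before step j (= after j steps) *)
Definition cdeg (adj : rel V) (s : seq (V * V)) (j : nat) (w : V) : nat :=
  #|[set y | present adj s j w y]|.

Definition step_ok (adj : rel V) (s : seq (V * V)) (j : nat) (uv : V * V) : bool :=
  present adj s j uv.1 uv.2 &&
  ([exists w, 0 < cdeg adj s j w < 3] ==>
     ((0 < cdeg adj s j uv.1) &&
      [forall w, (0 < cdeg adj s j w) ==> (cdeg adj s j uv.1 <= cdeg adj s j w)])).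

Definition is_run (adj : rel V) (s : seq (V * V)) :=
  (forall j d, j < size s -> step_ok adj s j (nth d s j)) /\
  (forall x y, ~~ present adj s (size s) x y).

Definition matching_of (s : seq (V * V)) : {set {set V}} :=
  [set [set p.1; p.2] | p : V * V in s].

Definition matched_at (s : seq (V * V)) (j : nat) (x : V) : bool :=
  covered s j.+1 x && ~~ covered s j x.

Definition hadj (M Ms : {set {set V}}) : rel V :=
  fun x y => [set x; y] \in M :|: Ms.

Fixpoint alt (M Ms : {set {set V}}) (b : bool) (x : V) (r : seq V) : bool :=
  if r is y :: r' then
    ([set x; y] \in (if b then Ms else M)) && alt M Ms (~~ b) y r'
  else true.

(* p = [x_0; ...; x_{2m+1}] is (the node sequence of) a component of
   (V, M ∪ M* ) which is an alternating path starting and ending with an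
   M*-edge, with m >= 1 edges of M: the nodes are distinct, the consecutive
   edges alternate M*, M, ..., M*, and every (M ∪ M* )-edge at a node of p
   joins two consecutive nodes of p (so the node set of p is a whole
   component and carries no further edges). *)
Definition is_MMpath (M Ms : {set {set V}}) (p : seq V) : bool :=
  match p with
  | [::] => false
  | x :: r =>
    [&& uniq p, odd (size r), 3 <= size r, alt M Ms true x r &
     [forall a, forall b, ((a \in p) && hadj M Ms a b) ==>
        ((b \in p) && ((index b p == (index a p).+1) ||
                       (index a p == (index b p).+1)))]]
  end.

Definition is_endpoint (M Ms : {set {set V}}) (w : V) :=
  exists p, is_MMpath M Ms p /\ (w = head w p \/ w = last w p).

Definition Fedges (adj : rel V) (M Ms : {set {set V}}) : {set {set V}} :=
  edges adj :\: (M :|: Ms).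

Definition transfer_at (adj : rel V) (s : seq (V * V)) (Ms : {set {set V}})
    (v w : V) (j : nat) :=
  is_endpoint (matching_of s) Ms w /\
  [set v; w] \in Fedges adj (matching_of s) Ms /\
  matched_at s j v /\
  cdeg adj s j.+1 w <= 1 /\ cdeg adj s j.+1 w < cdeg adj s j w.

Definition canceled_at (adj : rel V) (s : seq (V * V)) (Ms : {set {set V}})
    (v w : V) (j : nat) :=
  transfer_at adj s Ms v w j /\
  cdeg adj s j w = 1 /\ present adj s j w v /\
  exists v1 v2 j1 j2, v1 != v2 /\ j1 < j /\ j2 < j /\
    transfer_at adj s Ms v1 w j1 /\ transfer_at adj s Ms v2 w j2.

Definition debit (adj : rel V) (s : seq (V * V)) (Ms : {set {set V}}) (v w : V) :=
  exists j, transfer_at adj s Ms v w j /\ ~ canceled_at adj s Ms v w j.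

Definition degree1_endpoint (adj : rel V) (s : seq (V * V)) (Ms : {set {set V}})
    (i : nat) (u v : V) :=
  exists y w, (y = u \/ y = v) /\ debit adj s Ms y w /\ cdeg adj s i.+1 w = 1.

End OneTwoMinGreedy.

From mathcomp Require Import all_boot zify.
Set Implicit Arguments. Unset Strict Implicit. Unset Printing Implicit Defensive.

(* After the creation step some endpoint has current degree 1, so the node u'
   selected next has current degree 1.  Before the creation step no node had
   degree 1: u was selected although it had two uncovered neighbours, v and its
   M*-partner on X (no node of X is covered before X is created).  So the degree
   of u' dropped in the creation step, i.e. u' is adjacent to u or v.  Such an
   edge is either an M*-edge, which keeps u' on X (case (a)), or an F-edge.  If
   u' lies on X but is not M*-adjacent to u or v, its M*-partner on X is still
   present; as u' has degree 1 it is the node v' matched with u', and {u', v'}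
   would be an edge of both M and M* on X, which an alternating path cannot
   contain. *)

Section Matchings.
Variable V : finType.
Implicit Types (a b c d x y z : V) (adj : rel V) (N : {set {set V}}).

Lemma set2_eq_cases a b c d : [set a; b] = [set c; d] ->
  (a = c /\ b = d) \/ (a = d /\ b = c).
Proof.
move=> E.
have /set2P ha : a \in [set c; d] by rewrite -E set21.
have /set2P hb : b \in [set c; d] by rewrite -E set22.
have /set2P hc : c \in [set a; b] by rewrite E set21.
have /set2P hd : d \in [set a; b] by rewrite E set22.
by case: ha hb hc hd => ? [] ? [] ? [] ?; subst; auto.
Qed.

Lemma eq_set2r x y z : [set x; y] = [set x; z] -> y = z.
Proof. by case/set2_eq_cases => [[_ ->]|[-> ->]]. Qed.

Lemma mem_edges adj x y : symmetric adj -> ([set x; y] \in edges adj) = adj x y.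
Proof.
move=> sym; apply/idP/idP => [|axy]; last first.
  by rewrite inE; apply/existsP; exists x; apply/existsP; exists y; rewrite axy eqxx.
rewrite inE => /existsP [a /existsP [b /andP [hab /eqP E]]].
by case: (set2_eq_cases E) => [[-> ->]|[-> ->]]; rewrite // sym.
Qed.

Lemma matching_adj adj N x y : symmetric adj -> is_matching adj N ->
  [set x; y] \in N -> adj x y.
Proof. by move=> sym [sub _] hxy; rewrite -mem_edges // (subsetP sub _ hxy). Qed.

Definition unique_partner N :=
  forall x y z, [set x; y] \in N -> [set x; z] \in N -> y = z.

Lemma matching_unique_partner adj N : is_matching adj N -> unique_partner N.
Proof.
move=> [_ disj] x y z hy hz.
have [E|nE] := eqVneq [set x; y] [set x; z]; first exact: eq_set2r E.
have := disj _ _ hy hz nE; rewrite -setI_eq0 => /eqP hI.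
have : x \in [set x; y] :&: [set x; z] by rewrite inE !set21.
by rewrite hI inE.
Qed.

Lemma uniq_nth_partner N (p : seq V) t d : uniq p -> unique_partner N ->
  t.+2 < size p ->
  [set nth d p t.+1; nth d p t] \in N -> [set nth d p t.+1; nth d p t.+2] \in N ->
  False.
Proof.
move=> up uN ht h1 h2; have /eqP := uN _ _ _ h1 h2.
by rewrite nth_uniq // ?(ltnW (ltnW ht)); lia.
Qed.

End Matchings.

Section MMPaths.
Variables (V : finType) (M Ms : {set {set V}}).
Implicit Types (a b z : V) (p : seq V).

Lemma alt_nth (c : bool) (x : V) r t d : alt M Ms c x r -> t < size r ->
  [set nth d (x :: r) t; nth d (x :: r) t.+1] \in (if odd t (+) c then Ms else M).
Proof.
elim: r c x t => [|y r IH] c x t //= /andP [hxy halt].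
case: t => [|t] /= ht; first by case: c hxy halt.
by have := IH (~~ c) y t halt ht; rewrite addbN -addNb.
Qed.

Lemma MMpath_shape p : is_MMpath M Ms p -> [/\ uniq p, ~~ odd (size p) & 3 < size p].
Proof. by case: p => // x r /and5P [up /= -> ? _ _]; rewrite negbK. Qed.

Lemma MMpath_edge p t d : is_MMpath M Ms p -> t.+1 < size p ->
  [set nth d p t; nth d p t.+1] \in (if odd t then M else Ms).
Proof.
case: p => // x r /and5P [_ _ _ halt _] ht.
by have := alt_nth d halt ht; rewrite addbT; case: (odd t).
Qed.

Lemma MMpath_hadj p a b : is_MMpath M Ms p -> a \in p -> hadj M Ms a b ->
  (b \in p) && ((index b p == (index a p).+1) || (index a p == (index b p).+1)).
Proof.
case: p => // x r /and5P [_ _ _ _ /forallP closed] ha hab.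
by move: (closed a) => /forallP /(_ b) /implyP; apply; rewrite ha hab.
Qed.

Lemma MMpath_closed p a b : is_MMpath M Ms p -> a \in p -> hadj M Ms a b -> b \in p.
Proof. by move=> Hp ha /(MMpath_hadj Hp ha) /andP []. Qed.

Lemma MMpath_Ms_partner p z : is_MMpath M Ms p -> z \in p ->
  exists2 a, a \in p & [set z; a] \in Ms.
Proof.
move=> Hp hz; have [_ ev _] := MMpath_shape Hp.
have ez : nth z p (index z p) = z by rewrite nth_index.
have hk : index z p < size p by rewrite index_mem.
case ok: (odd (index z p)).
- case: (index z p) ok ez hk => [//|k] /= ok ez hk.
  exists (nth z p k); first exact: mem_nth (ltnW hk).
  by have := MMpath_edge z Hp hk; rewrite (negbTE ok) ez setUC.
- have hk1 : (index z p).+1 < size p.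
    by rewrite ltn_neqAle hk andbT; apply: contraNneq ev => <- /=; rewrite ok.
  exists (nth z p (index z p).+1); first exact: mem_nth.
  by have := MMpath_edge z Hp hk1; rewrite ok ez.
Qed.

Lemma MMpath_edge_not_common p t d : unique_partner M -> unique_partner Ms ->
  is_MMpath M Ms p -> t.+1 < size p ->
  [set nth d p t; nth d p t.+1] \in M -> [set nth d p t; nth d p t.+1] \in Ms -> False.
Proof.
move=> uM uMs Hp ht inM inMs; have [up _ big] := MMpath_shape Hp.
case ot: (odd t).
- case: t ot ht inM inMs => [//|t] /= ot ht inM inMs.
  have := MMpath_edge d Hp (ltnW ht); rewrite (negbTE ot) => prev.
  by apply: (uniq_nth_partner up uMs ht _ inMs); rewrite setUC.
- have [ht2|ht2] := ltnP t.+2 (size p).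
    have := MMpath_edge d Hp ht2; rewrite /= ot => next.
    by apply: (uniq_nth_partner up uM ht2 _ next); rewrite setUC.
  (* the last edge of the path: the edge before it is an M-edge *)
  case: t ot ht inM inMs ht2 => [|t] /= ot ht inM inMs ht2; first lia.
  have := MMpath_edge d Hp (ltnW ht); rewrite (negbFE ot) => prev.
  by apply: (uniq_nth_partner up uM ht _ inM); rewrite setUC.
Qed.

Lemma MMpath_no_common_edge p a b : unique_partner M -> unique_partner Ms ->
  is_MMpath M Ms p -> a \in p -> [set a; b] \in M -> [set a; b] \in Ms -> False.
Proof.
move=> uM uMs Hp ha inM inMs.
have hab : hadj M Ms a b by rewrite /hadj inE inM.
have /andP [hb /orP [] /eqP e] := MMpath_hadj Hp ha hab.
- apply: (MMpath_edge_not_common (t := index a p) (d := a) uM uMs Hp).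
  + by rewrite -e index_mem.
  + by rewrite -e !nth_index.
  + by rewrite -e !nth_index.
- apply: (MMpath_edge_not_common (t := index b p) (d := a) uM uMs Hp).
  + by rewrite -e index_mem.
  + by rewrite -e !nth_index // setUC.
  + by rewrite -e !nth_index // setUC.
Qed.

End MMPaths.

Section Runs.
Variables (V : finType) (adj : rel V) (s : seq (V * V)).
Implicit Types (x y z : V) (pr : V * V).

Definition incident pr x := (pr.1 == x) || (pr.2 == x).

Lemma coveredP j x d :
  reflect (exists2 k, k < minn j (size s) & incident (nth d s k) x) (covered s j x).
Proof.
apply: (iffP (has_nthP d)) => [[k]|[k]]; rewrite size_take_min => hk.
  by rewrite nth_take; [exists k|lia].
by exists k; rewrite ?nth_take //; lia.
Qed.

Lemma covered_step j d x : j < size s ->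
  covered s j.+1 x = covered s j x || incident (nth d s j) x.
Proof. by move=> hj; rewrite /covered (take_nth d hj) has_rcons orbC. Qed.

Lemma mem_matching_of pr : pr \in s -> [set pr.1; pr.2] \in matching_of s.
Proof. by move=> hpr; apply/imsetP; exists pr. Qed.

Lemma matching_ofP x y d : [set x; y] \in matching_of s ->
  exists2 j, j < size s & [set x; y] = [set (nth d s j).1; (nth d s j).2].
Proof.
case/imsetP => pr hpr E; exists (index pr s); first by rewrite index_mem.
by rewrite nth_index.
Qed.

Lemma set2_incident x y pr (E : [set x; y] = [set pr.1; pr.2]) : incident pr x.
Proof.
have : x \in [set pr.1; pr.2] by rewrite -E set21.
by rewrite in_set2 /incident !(eq_sym x).
Qed.

Lemma present_cdeg_gt0 j x y : present adj s j x y -> 0 < cdeg adj s j x.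
Proof. by move=> hxy; apply/card_gt0P; exists y; rewrite inE. Qed.

Lemma present2_cdeg j x y z : y != z ->
  present adj s j x y -> present adj s j x z -> 1 < cdeg adj s j x.
Proof.
move=> yz hy hz; have : [set y; z] \subset [set w | present adj s j x w].
  by apply/subsetP => w; rewrite !inE => /orP [] /eqP ->.
by move/subset_leq_card; rewrite cards2 yz.
Qed.

Lemma cdeg1_present_uniq j x y z : cdeg adj s j x = 1 ->
  present adj s j x y -> present adj s j x z -> y = z.
Proof.
move=> d1 hy hz; have [//|yz] := eqVneq y z.
by have := present2_cdeg yz hy hz; rewrite d1.
Qed.

Lemma cdeg_step_adj j d x : j < size s -> ~~ incident (nth d s j) x ->
  cdeg adj s j.+1 x != cdeg adj s j x -> adj x (nth d s j).1 || adj x (nth d s j).2.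
Proof.
move=> hj nx; apply: contraNT => /norP [n1 n2]; apply/eqP/eq_card => z.
rewrite !inE /present !(covered_step d _ hj) (negbTE nx) orbF.
have [axz|] //= := boolP (adj x z).
have nz : ~~ incident (nth d s j) z.
  by apply/norP; split; apply/eqP => e; [move: n1|move: n2]; rewrite e axz.
by rewrite (negbTE nz) orbF.
Qed.

Hypothesis Hrun : is_run adj s.

Lemma run_present j d : j < size s -> present adj s j (nth d s j).1 (nth d s j).2.
Proof. by move=> hj; case/andP: (Hrun.1 j d hj). Qed.

Lemma run_cdeg_gt0 j x : 0 < cdeg adj s j x -> j < size s.
Proof.
case/card_gt0P => y; rewrite inE => hxy; rewrite ltnNge; apply/negP => hj.
move: hxy; rewrite /present /covered (take_oversize hj) => hxy.
by have := Hrun.2 x y; rewrite /present /covered take_size hxy.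
Qed.

Lemma run_selected_min j d z : j < size s -> 0 < cdeg adj s j z < 3 ->
  cdeg adj s j (nth d s j).1 <= cdeg adj s j z.
Proof.
move=> hj hz; have /andP [_ /implyP rule] := Hrun.1 j d hj.
have /andP [_ /forallP /(_ z)] := rule (introT existsP (ex_intro _ z hz)).
by case/andP: hz => ->.
Qed.

Lemma run_selected_cdeg1 j d w : j < size s -> cdeg adj s j w = 1 ->
  cdeg adj s j (nth d s j).1 = 1.
Proof.
move=> hj hw; have := run_selected_min d hj (z := w); rewrite hw => /(_ isT).
by have := present_cdeg_gt0 (run_present d hj); lia.
Qed.

Lemma run_selected_cdeg_gt1 j d z : j < size s -> 1 < cdeg adj s j (nth d s j).1 ->
  cdeg adj s j z != 1.
Proof. by move=> hj h1; apply/eqP => hz; rewrite (run_selected_cdeg1 d hj hz) in h1. Qed.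

Lemma run_disjoint j1 j2 d x : j1 < j2 -> j2 < size s ->
  incident (nth d s j1) x -> ~~ incident (nth d s j2) x.
Proof.
move=> h12 h2 h1x; have /and3P [_ c1 c2] := run_present d h2.
have cx : covered s j2 x by apply/(coveredP _ _ d); exists j1 => //; lia.
by apply/orP => -[] /eqP ex; [move: c1|move: c2]; rewrite ex cx.
Qed.

Lemma matching_of_unique_partner : unique_partner (matching_of s).
Proof.
move=> x y z /(matching_ofP (x, x)) [j1 hj1 E1] /(matching_ofP (x, x)) [j2 hj2 E2].
have i1 := set2_incident E1; have i2 := set2_incident E2.
case: (ltngtP j1 j2) => h; last by subst j2; apply: (@eq_set2r _ x); rewrite E1 E2.
- by move: i2; rewrite (negbTE (run_disjoint h hj2 i1)).
- by move: i1; rewrite (negbTE (run_disjoint h hj1 i2)).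
Qed.

Lemma run_matched_uncovered j d x y : incident (nth d s j) y ->
  ~~ covered s j.+1 x -> [set y; x] \notin matching_of s.
Proof.
move=> hy nx; apply/negP => /(matching_ofP d) [k hk E].
have [hjk|hkj] := ltnP j k.
  by move: (set2_incident E); rewrite (negbTE (run_disjoint hjk hk hy)).
have kx : incident (nth d s k) x by apply: set2_incident; rewrite -E setUC.
apply/negP: nx; apply/negPn/(coveredP _ _ d); exists k => //.
by rewrite leq_min ltnS hkj.
Qed.

End Runs.

Lemma MMpath_uncovered (V : finType) (s : seq (V * V)) (Ms : {set {set V}}) p i a :
  is_MMpath (matching_of s) Ms p ->
  (forall j d, j < i -> ~~ (((nth d s j).1 \in p) && ((nth d s j).2 \in p))) ->
  a \in p -> ~~ covered s i a.
Proof.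
move=> Hp early ha; apply/negP => /(coveredP _ _ _ (a, a)) [k hk].
set pr := nth (a, a) s k => inc.
have kM : [set pr.1; pr.2] \in matching_of s.
  by apply/mem_matching_of/mem_nth; apply: leq_trans hk (geq_minr _ _).
have /negP := early k (a, a) (leq_trans hk (geq_minl _ _)); apply; rewrite -/pr.
case/orP: inc => /eqP ea; rewrite ea ha ?andbT /=.
- by apply: (MMpath_closed Hp ha); rewrite /hadj inE -ea kM.
- by apply: (MMpath_closed Hp ha); rewrite /hadj inE -ea setUC kM.
Qed.

Lemma MMpath_selected_cdeg1_Ms_absent (V : finType) (adj : rel V) s Ms p j d b :
  is_run adj s -> is_matching adj Ms -> is_MMpath (matching_of s) Ms p -> j < size s ->
  (nth d s j).1 \in p -> cdeg adj s j (nth d s j).1 = 1 ->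
  [set (nth d s j).1; b] \in Ms -> ~~ present adj s j (nth d s j).1 b.
Proof.
move=> Hrun HMs Hp hj hp d1 hb; apply/negP => pb.
have eb := cdeg1_present_uniq d1 pb (run_present Hrun d hj).
have uM := matching_of_unique_partner Hrun; have uMs := matching_unique_partner HMs.
apply: (MMpath_no_common_edge uM uMs Hp hp _ hb).
by rewrite eb mem_matching_of ?mem_nth.
Qed.

Lemma MMpath_creation_cdeg_gt1 (V : finType) (adj : rel V) s Ms p i d :
  symmetric adj -> is_run adj s -> is_matching adj Ms -> is_MMpath (matching_of s) Ms p ->
  i < size s -> (nth d s i).1 \in p -> (forall a, a \in p -> ~~ covered s i a) ->
  1 < cdeg adj s i (nth d s i).1.
Proof.
move=> sym Hrun HMs Hp hi hp unc; have [a ha hua] := MMpath_Ms_partner Hp hp.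
have uM := matching_of_unique_partner Hrun; have uMs := matching_unique_partner HMs.
have hM := mem_matching_of (mem_nth d hi).
apply: (present2_cdeg (y := (nth d s i).2) (z := a)); last first.
- by rewrite /present (matching_adj sym HMs hua) !unc.
- exact: run_present.
apply/eqP => ea; rewrite -ea in hua.
exact: MMpath_no_common_edge uM uMs Hp hp hM hua.
Qed.

Theorem lemma11 (V : finType) (adj : rel V) (s : seq (V * V))
    (Ms : {set {set V}}) (p : seq V) (i : nat) (u v : V) :
  simple_graph adj ->
  is_run adj s ->
  maximum_matching adj Ms ->
  (forall x y, hadj (matching_of s) Ms x y ->
     [set x; y] \in matching_of s :&: Ms \/
     exists q, is_MMpath (matching_of s) Ms q /\ x \in q) ->
  is_MMpath (matching_of s) Ms p ->
  i < size s -> nth (u, v) s i = (u, v) ->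
  u \in p -> v \in p ->
  (forall j d, j < i -> ~~ (((nth d s j).1 \in p) && ((nth d s j).2 \in p))) ->
  degree1_endpoint adj s Ms i u v ->
  exists u' v', i.+1 < size s /\ nth (u, v) s i.+1 = (u', v') /\
    ((u' \in p /\ ([set u; u'] \in Ms \/ [set v; u'] \in Ms)) \/
     (u' \notin p /\ ([set u; u'] \in Fedges adj (matching_of s) Ms \/
                      [set v; u'] \in Fedges adj (matching_of s) Ms))).
Proof.
move=> [sym _] Hrun [HMs _] _ Hp Hi Hnth Hu Hv Hearly [_ [w [_ [_ Hw]]]].
have unc a : a \in p -> ~~ covered s i a := MMpath_uncovered Hp Hearly.
have covS x : covered s i.+1 x = covered s i x || incident (u, v) x.
  by rewrite (covered_step (u, v) _ Hi) Hnth.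
have Hsz : i.+1 < size s by apply: (run_cdeg_gt0 Hrun (x := w)); rewrite Hw.
case E1 : (nth (u, v) s i.+1) => [u' v']; exists u', v'; do 2 split => //.
have ncu' : ~~ covered s i.+1 u'.
  by have /and3P [] := run_present Hrun (u, v) Hsz; rewrite E1.
have du' : cdeg adj s i.+1 u' = 1.
  by have := run_selected_cdeg1 Hrun (u, v) Hsz Hw; rewrite E1.
have no_deg1 z : cdeg adj s i z != 1.
  apply: (run_selected_cdeg_gt1 Hrun (d := (u, v)) z Hi).
  by have := MMpath_creation_cdeg_gt1 (d := (u, v)) sym Hrun HMs Hp Hi; rewrite Hnth; apply.
have [y hy ayu'] : exists2 y, y = u \/ y = v & adj y u'.
  have nu' : ~~ incident (u, v) u' by move: ncu'; rewrite covS negb_or => /andP [].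
  have := cdeg_step_adj (adj := adj) (x := u') (d := (u, v)) Hi; rewrite Hnth.
  rewrite du' eq_sym no_deg1 => /(_ nu' isT) /orP [] /= h.
  - by exists u; [left|rewrite sym].
  - by exists v; [right|rewrite sym].
have [yu'Ms|yu'Ms] := boolP ([set y; u'] \in Ms).
  left; split; last by case: hy => <-; [left|right].
  have yp : y \in p by case: hy => ->.
  by apply: (MMpath_closed Hp yp); rewrite /hadj inE yu'Ms orbT.
have [u'p|u'np] := boolP (u' \in p); last first.
  have yu'M : [set y; u'] \notin matching_of s.
    apply: (run_matched_uncovered Hrun (d := (u, v)) _ ncu').
    by rewrite Hnth; case: hy => ->; rewrite /incident eqxx ?orbT.
  have yu'F : [set y; u'] \in Fedges adj (matching_of s) Ms.
    by rewrite in_setD in_setU negb_or yu'M yu'Ms mem_edges.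
  by right; split=> //; case: hy => ey; subst y; [left|right].
left; split=> //.
have [b hb hu'b] := MMpath_Ms_partner Hp u'p.
have := MMpath_selected_cdeg1_Ms_absent (d := (u, v)) (b := b) Hrun HMs Hp Hsz.
rewrite E1 /= => /(_ u'p du' hu'b).
rewrite /present (matching_adj sym HMs hu'b) ncu' covS negb_or (unc b hb) /= negbK.
by case/orP => /= /eqP ->; [left|right]; rewrite setUC.
Qed.
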